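(* Let $(B,D,d,\theta)$ be a regular E-system and $\psi:Q\to\operatorname{Coker}d$ a ring homomorphism. Let $k\in Z^3_{Shu}(\operatorname{Coker}d,\operatorname{Ker}d)$ be the structure cocycle of the reduced Ann-category of $\mathcal A_{B\to D}$. Then there exists a ring extension of $B$ by $Q$ of type $B\to D$ inducing $\psi$ if and only if the class $\overline{\psi^*k}$ vanishes in $H^3_{Shu}(Q,\operatorname{Ker}d)$. Moreover, if $\overline{\psi^*k}=0$, there is a bijection $$\mathrm{Ext}_{B\to D}(Q,B,\psi)\leftrightarrow H^2_{Shu}(Q,\operatorname{Ker}d).$$
   Context: E-system $(B,D,d,\theta)$: $B$ a ring, $D$ a unital ring, $d:B\to D$, $\theta:D\to M_B$ ring homomorphisms into the ring of bimultiplications of $B$ with $\theta(d(b))=\mu_b$ (inner bimultiplication), $d(\theta_xb)=x\,d(b)$, $d(b\theta_x)=d(b)x$; regular if $\theta(1)=1$ and any two elements of $\theta(D)$ are permutable ($\sigma(a\tau)=(\sigma a)\tau$, $\tau(a\sigma)=(\tau a)\sigma$). Then $\operatorname{Ker}d$ is a $\operatorname{Coker}d$-bimodule via $sa=\theta_x a$, $as=a\theta_x$ ($x\in s$). Associated Ann-category $\mathcal A_{B\to D}$: objects elements of $D$, morphisms $x\to y$ the $b\in B$ with $y=d(b)+x$, composition addition, $\oplus,\otimes$ given by $+,\cdot$ on objects and $b+b'$, $bb'+b\theta_{x'}+\theta_xb'$ on morphisms; all constraints identities; it is a regular Ann-category with $\pi_0=\operatorname{Coker}d$, $\pi_1=\operatorname{Ker}d$.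 By structure transport it is Ann-equivalent to a reduced Ann-category of type $(\operatorname{Coker}d,\operatorname{Ker}d)$ (objects elements of $\operatorname{Coker}d$, morphisms $(s,a):s\to s$, $a\in\operatorname{Ker}d$) whose constraints form a Shukla 3-cocycle $k\in Z^3_{Shu}(\operatorname{Coker}d,\operatorname{Ker}d)$, well defined up to cohomology; $\psi^*k\in Z^3_{Shu}(Q,\operatorname{Ker}d)$ is its pullback along $\psi$ ($\operatorname{Ker}d$ a $Q$-bimodule via $\psi$). $H^n_{Shu}$ denotes Shukla cohomology of rings. A ring extension of $B$ by $Q$ of type $B\to D$: exact sequence of ring homomorphisms $0\to B\xrightarrow{j}E\xrightarrow{p}Q\to0$ with a ring homomorphism $\varepsilon:E\to D$ such that $(B,E,j,\theta')$ ($\theta'$ of bimultiplication type: $\theta'_eb=eb$, $b\theta'_e=be$) is an E-system and $(\mathrm{id}_B,\varepsilon)$ is a morphism of E-systems (i.e. $\varepsilon j=d$ and $eb=\theta_{\varepsilon(e)}b$, $be=b\theta_{\varepsilon(e)}$); it induces the ring homomorphism $\psi:Q\to\operatorname{Coker}d$ with $\psi p=q\varepsilon$, $q$ the projection $D\to D/\operatorname{Im}d$. Extensions $(E,j,p,\varepsilon)$, $(E',j',p',\varepsilon')$ are equivalent if there is a ring homomorphism $\eta:E\to E'$ with $\eta j=j'$, $p'\eta=p$, $\varepsilon'\eta=\varepsilon$; $\mathrm{Ext}_{B\to D}(Q,B,\psi)$ is the set of equivalence classes of such extensions inducing $\psi$. *)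

From HB Require Import structures.
From mathcomp Require Import all_boot all_algebra.
Set Implicit Arguments. Unset Strict Implicit. Unset Printing Implicit Defensive.
Import GRing.Theory.
Local Open Scope ring_scope.

Record nuRing := NURing {
  nur_car :> zmodType;
  nur_mul : nur_car -> nur_car -> nur_car;
  nur_mulA : forall a b c, nur_mul a (nur_mul b c) = nur_mul (nur_mul a b) c;
  nur_mulDl : forall a b c, nur_mul (a + b) c = nur_mul a c + nur_mul b c;
  nur_mulDr : forall a b c, nur_mul a (b + c) = nur_mul a b + nur_mul a c }.

(* An E-system (B, D, d, theta).  theta : D -> M_B is given by its two
   components: es_thl x a = theta_x a  and  es_thr a x = a theta_x.
   The ring M_B of bimultiplications has (sigma tau) a = sigma (tau a),
   a (sigma tau) = (a sigma) tau. *)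
Record Esystem (B : nuRing) (D : pzRingType) := ESystem {
  es_d : B -> D;
  es_dD : forall a b, es_d (a + b) = es_d a + es_d b;
  es_dM : forall a b, es_d (nur_mul a b) = es_d a * es_d b;
  es_thl : D -> B -> B;
  es_thr : B -> D -> B;
  es_thlD : forall x a b, es_thl x (a + b) = es_thl x a + es_thl x b;
  es_thrD : forall x a b, es_thr (a + b) x = es_thr a x + es_thr b x;
  es_thlM : forall x a b, es_thl x (nur_mul a b) = nur_mul (es_thl x a) b;
  es_thrM : forall x a b, es_thr (nur_mul a b) x = nur_mul a (es_thr b x);
  es_thlr : forall x a b, nur_mul a (es_thl x b) = nur_mul (es_thr a x) b;
  es_thDl : forall x y a, es_thl (x + y) a = es_thl x a + es_thl y a;
  es_thDr : forall x y a, es_thr a (x + y) = es_thr a x + es_thr a y;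
  es_thMl : forall x y a, es_thl (x * y) a = es_thl x (es_thl y a);
  es_thMr : forall x y a, es_thr a (x * y) = es_thr (es_thr a x) y;
  es_inner_l : forall b a, es_thl (es_d b) a = nur_mul b a;
  es_inner_r : forall b a, es_thr a (es_d b) = nur_mul a b;
  es_d_thl : forall x b, es_d (es_thl x b) = x * es_d b;
  es_d_thr : forall x b, es_d (es_thr b x) = es_d b * x }.

Section Defs.
Variables (B : nuRing) (D : pzRingType) (S : Esystem B D).
Local Notation d := (es_d S).
Local Notation thl := (es_thl S).
Local Notation thr := (es_thr S).

Definition es_regular : Prop :=
  (forall a, thl 1 a = a) /\ (forall a, thr a 1 = a) /\
  (forall x y a, thl x (thr a y) = thr (thl x a) y).

Definition is_coker (C : pzRingType) (q : {rmorphism D -> C}) : Prop :=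
  (forall s, exists x, q x = s) /\ (forall x, q x = 0 <-> exists b, x = d b).

Variables (C : pzRingType) (q : {rmorphism D -> C}).

(* Data of the structure transport of A_{B->D} to its reduced Ann-category:
   a normalized section u of q, and elements f, g of B realizing the
   isomorphisms u s (+) u t -> u (s+t),  u s (x) u t -> u (s t). *)
Definition transport_data (u : C -> D) (f g : C -> C -> B) : Prop :=
  (forall s, q (u s) = s) /\ u 0 = 0 /\
  (forall s t, d (f s t) = u s + u t - u (s + t)) /\
  (forall s t, d (g s t) = u s * u t - u (s * t)) /\
  (forall t, f 0 t = 0 /\ f t 0 = 0 /\ g 0 t = 0 /\ g t 0 = 0).

(* Components (xi, eta, alpha, lambda, rho) of the structure cocycle k
   of the reduced Ann-category (values in Ker d). *)
Section Cocycle.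
Variables (u : C -> D) (f g : C -> C -> B).
Definition k_xi r s t := f r s + f (r + s) t - f s t - f r (s + t).
Definition k_eta s t := f s t - f t s.
Definition k_alpha r s t :=
  thl (u r) (g s t) + g r (s * t) - thr (g r s) (u t) - g (r * s) t.
Definition k_lambda r s t :=
  thl (u r) (f s t) + g r (s + t) - g r s - g r t - f (r * s) (r * t).
Definition k_rho r s t :=
  thr (f r s) (u t) + g (r + s) t - g r t - g s t - f (r * t) (s * t).
End Cocycle.

(* The Shukla (Mac Lane) low-dimensional cochain complex of a ring Q with
   coefficients in Ker d, made a Q-bimodule by actions L, R. *)
Section Complex.
Variables (Q : pzRingType) (L : Q -> B -> B) (R : B -> Q -> B).

Definition in_ker (a : B) := d a = 0.

Definition cochain2 (mu nu : Q -> Q -> B) : Prop :=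
  (forall x y, in_ker (mu x y) /\ in_ker (nu x y)) /\
  (forall x, mu 0 x = 0 /\ mu x 0 = 0 /\ nu 0 x = 0 /\ nu x 0 = 0).

Definition is_d2 (mu nu : Q -> Q -> B) (xi : Q -> Q -> Q -> B) (eta : Q -> Q -> B)
  (al la rh : Q -> Q -> Q -> B) : Prop :=
  forall x y z,
    xi x y z = mu x y + mu (x + y) z - mu y z - mu x (y + z) /\
    eta x y = mu x y - mu y x /\
    al x y z = L x (nu y z) + nu x (y * z) - R (nu x y) z - nu (x * y) z /\
    la x y z = L x (mu y z) + nu x (y + z) - nu x y - nu x z - mu (x * y) (x * z) /\
    rh x y z = R (mu x y) z + nu (x + y) z - nu x z - nu y z - mu (x * z) (y * z).

Definition is_coboundary3 xi eta al la rh : Prop :=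
  exists mu nu, cochain2 mu nu /\ is_d2 mu nu xi eta al la rh.

Definition zeroQ3 (x y z : Q) : B := 0.
Definition zeroQ2 (x y : Q) : B := 0.

Definition is_cocycle2 (c : (Q -> Q -> B) * (Q -> Q -> B)) : Prop :=
  cochain2 c.1 c.2 /\ is_d2 c.1 c.2 zeroQ3 zeroQ2 zeroQ3 zeroQ3 zeroQ3.

Definition cohomologous2 (c c' : (Q -> Q -> B) * (Q -> Q -> B)) : Prop :=
  exists t : Q -> B, (forall x, in_ker (t x)) /\ t 0 = 0 /\
    forall x y, c'.1 x y = c.1 x y + (t x + t y - t (x + y)) /\
                c'.2 x y = c.2 x y + (L x (t y) + R (t x) y - t (x * y)).
End Complex.

Record ext_type (Q : pzRingType) (psi : {rmorphism Q -> C}) := ExtT {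
  ext_car : pzRingType;
  ext_j : B -> ext_car;
  ext_p : {rmorphism ext_car -> Q};
  ext_eps : {rmorphism ext_car -> D};
  ext_jD : forall a b, ext_j (a + b) = ext_j a + ext_j b;
  ext_jM : forall a b, ext_j (nur_mul a b) = ext_j a * ext_j b;
  ext_j_inj : injective ext_j;
  ext_p_surj : forall y, exists e, ext_p e = y;
  ext_exact : forall e, ext_p e = 0 <-> exists b, e = ext_j b;
  ext_eps_j : forall b, ext_eps (ext_j b) = d b;
  ext_eps_l : forall e b, ext_j (thl (ext_eps e) b) = e * ext_j b;
  ext_eps_r : forall e b, ext_j (thr b (ext_eps e)) = ext_j b * e;
  ext_induces : forall e, q (ext_eps e) = psi (ext_p e) }.

Definition ext_equiv (Q : pzRingType) (psi : {rmorphism Q -> C})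
  (X Y : ext_type psi) : Prop :=
  exists eta : {rmorphism ext_car X -> ext_car Y},
    (forall b, eta (ext_j X b) = ext_j Y b) /\
    (forall e, ext_p Y (eta e) = ext_p X e) /\
    (forall e, ext_eps Y (eta e) = ext_eps X e).

Section Pullback.
Variables (Q : pzRingType) (psi : {rmorphism Q -> C}) (u : C -> D) (f g : C -> C -> B).

Definition actL (x : Q) (a : B) := thl (u (psi x)) a.
Definition actR (a : B) (x : Q) := thr a (u (psi x)).

Definition pullback_obstruction_vanishes : Prop :=
  is_coboundary3 actL actR
    (fun x y z => k_xi f (psi x) (psi y) (psi z))
    (fun x y => k_eta f (psi x) (psi y))
    (fun x y z => k_alpha u g (psi x) (psi y) (psi z))
    (fun x y z => k_lambda u f g (psi x) (psi y) (psi z))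
    (fun x y z => k_rho u f g (psi x) (psi y) (psi z)).

Definition ext_H2_bijection : Prop :=
  exists Phi : ext_type psi -> (Q -> Q -> B) * (Q -> Q -> B),
    (forall X, is_cocycle2 actL actR (Phi X)) /\
    (forall X Y, ext_equiv X Y <-> cohomologous2 actL actR (Phi X) (Phi Y)) /\
    (forall c, is_cocycle2 actL actR c ->
       exists X, cohomologous2 actL actR (Phi X) c).
End Pullback.
End Defs.

From HB Require Import structures.
From mathcomp Require Import all_boot all_algebra.
From Stdlib Require Import ClassicalEpsilon.
Set Implicit Arguments. Unset Strict Implicit. Unset Printing Implicit Defensive.
Import GRing.Theory.
Local Open Scope ring_scope.

(* A normal section s of an extension E (p s = id, eps s = u psi, s 0 = 0)
   splits E as s(Q) + j(B), and its defects s x + s y - s (x + y) and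
   s x * s y - s (x * y) form a factor set of B-valued 2-cochains: their
   Shukla differential vanishes and d maps them to the defects of
   U = u psi.  Conversely a factor set is a ring law on B x Q, the crossed
   product, which is an extension of type B -> D.  Since d (f psi, g psi) is
   the same defect of U, the difference of (f psi, g psi) and a factor set is
   a Ker d-valued cochain with coboundary psi^* k: a factor set exists iff
   psi^* k is a coboundary.  Fixing one factor set c0, the others are c0 minus
   the 2-cocycles, changing the section changes the factor set by a
   coboundary, and a coboundary between the factor sets of two extensions
   integrates to an equivalence; so X |-> [c0 - factor set of X] is a
   bijection onto H^2. *)

(* A reflexive decision procedure for identities in abelian groups: both sides
   are reified over a common list of atoms and compared by their integer
   coefficient vectors. *)
Inductive zexpr := ZAtom of nat | ZZero | ZAdd of zexpr & zexpr | ZOpp of zexpr.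

Section AbelianNormalForm.
Variable V : zmodType.
Implicit Types (env : seq V) (s t : seq int).

Fixpoint zeval env (e : zexpr) : V :=
  match e with
  | ZAtom n => nth 0 env n
  | ZZero => 0
  | ZAdd a b => zeval env a + zeval env b
  | ZOpp a => - zeval env a
  end.

Fixpoint coef_add s t : seq int :=
  match s, t with
  | [::], _ => t
  | _, [::] => s
  | a :: s', b :: t' => (a + b) :: coef_add s' t'
  end.

Fixpoint coefs (e : zexpr) : seq int :=
  match e with
  | ZAtom n => rcons (nseq n 0) 1
  | ZZero => [::]
  | ZAdd a b => coef_add (coefs a) (coefs b)
  | ZOpp a => map -%R (coefs a)
  end.

Fixpoint coef_eval env s : V :=
  match s with
  | [::] => 0
  | c :: s' => head 0 env *~ c + coef_eval (behead env) s'
  end.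

Lemma coef_eval_add env s t :
  coef_eval env (coef_add s t) = coef_eval env s + coef_eval env t.
Proof.
elim: s t env => [|a s IH] [|b t] env /=; rewrite ?add0r ?addr0 //.
by rewrite IH mulrzDr addrACA.
Qed.

Lemma coef_eval_opp env s : coef_eval env (map -%R s) = - coef_eval env s.
Proof.
elim: s env => [|a s IH] env /=; first by rewrite oppr0.
by rewrite IH mulrNz opprD.
Qed.

Lemma coef_eval_atom env n : coef_eval env (rcons (nseq n 0) 1) = nth 0 env n.
Proof.
elim: n env => [|n IH] [|x env] /=; rewrite ?mul0rz ?addr0 ?add0r ?IH //.
by rewrite nth_nil.
Qed.

Lemma zeval_coefs env e : zeval env e = coef_eval env (coefs e).
Proof.
elim: e => [n||a IHa b IHb|a IHa] /=.
- by rewrite coef_eval_atom.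
- by [].
- by rewrite coef_eval_add IHa IHb.
- by rewrite coef_eval_opp IHa.
Qed.

Lemma coef_eval_zero env s : all (pred1 0) s -> coef_eval env s = 0.
Proof.
elim: s env => [|a s IH] env //= /andP[/eqP -> H].
by rewrite IH // mulr0z add0r.
Qed.

Lemma zeval_eq env a b :
  all (pred1 0) (coef_add (coefs a) (map -%R (coefs b))) ->
  zeval env a = zeval env b.
Proof.
move=> H; apply/eqP; rewrite -subr_eq0; apply/eqP.
by rewrite !zeval_coefs -coef_eval_opp -coef_eval_add coef_eval_zero.
Qed.
End AbelianNormalForm.

Ltac atom_index x env n :=
  match env with
  | (?y :: _) => let _ := match goal with _ => unify x y end in constr:(n)
  | (_ :: ?env') => atom_index x env' (S n)
  | _ => constr:(n)
  end.
Ltac env_size env :=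
  lazymatch env with
  | (_ :: ?env') => let n := env_size env' in constr:(S n)
  | _ => constr:(O)
  end.
Ltac env_snoc env x :=
  lazymatch env with
  | (?y :: ?env') => let r := env_snoc env' x in constr:(y :: r)
  | _ => constr:(x :: env)
  end.
Ltac reify_zexpr t env :=
  lazymatch t with
  | @GRing.add _ ?a ?b =>
      lazymatch reify_zexpr a env with (?ea, ?env1) =>
      lazymatch reify_zexpr b env1 with (?eb, ?env2) =>
        constr:((ZAdd ea eb, env2)) end end
  | @GRing.opp _ ?a =>
      lazymatch reify_zexpr a env with (?ea, ?env1) => constr:((ZOpp ea, env1)) end
  | @GRing.zero _ => constr:((ZZero, env))
  | _ =>
      let n := atom_index t env 0%N in
      let l := env_size env in
      match constr:(tt) with
      | _ => let _ := match goal with _ => constr_eq n l end in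
             let env' := env_snoc env t in constr:((ZAtom n, env'))
      | _ => constr:((ZAtom n, env))
      end
  end.
Ltac abel :=
  lazymatch goal with
  | |- @eq ?T ?a ?b =>
      lazymatch reify_zexpr a (@nil T) with (?ea, ?env1) =>
      lazymatch reify_zexpr b env1 with (?eb, ?env2) =>
        change (@zeval _ env2 ea = zeval env2 eb);
        apply: zeval_eq; vm_compute; reflexivity end end
  end.

Lemma eq_of_subr_eq (V : zmodType) (p x y : V) : p = 0 -> x - y = p -> x = y.
Proof. by move=> -> /eqP; rewrite subr_eq0 => /eqP. Qed.

Section AdditiveFun.
Variables (U V : zmodType) (h : U -> V).
Hypothesis hD : {morph h : a b / a + b}.
Lemma additive0 : h 0 = 0.
Proof. by apply: (addrI (h 0)); rewrite -hD !addr0. Qed.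
Lemma additiveN a : h (- a) = - h a.
Proof. by apply: (addrI (h a)); rewrite -hD !subrr additive0. Qed.
Lemma additiveB a b : h (a - b) = h a - h b.
Proof. by rewrite hD additiveN. Qed.
End AdditiveFun.

Section EsystemTheory.
Variables (B : nuRing) (D : pzRingType) (S : Esystem B D).
Local Notation d := (es_d S).
Local Notation thl := (es_thl S).
Local Notation thr := (es_thr S).
Local Notation m := (@nur_mul B).

Lemma es_d0 : d 0 = 0. Proof. exact: additive0 (es_dD S). Qed.
Lemma es_dB a b : d (a - b) = d a - d b. Proof. by rewrite (additiveB (es_dD S)). Qed.
Lemma es_thl0 x : thl x 0 = 0. Proof. exact: additive0 (es_thlD S x). Qed.
Lemma es_thlN x a : thl x (- a) = - thl x a.
Proof. by rewrite (additiveN (es_thlD S x)). Qed.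
Lemma es_thlB x a b : thl x (a - b) = thl x a - thl x b.
Proof. by rewrite (additiveB (es_thlD S x)). Qed.
Lemma es_thr0 x : thr 0 x = 0. Proof. exact: additive0 (es_thrD S x). Qed.
Lemma es_thrN x a : thr (- a) x = - thr a x.
Proof. by rewrite (additiveN (es_thrD S x)). Qed.
Lemma es_thrB x a b : thr (a - b) x = thr a x - thr b x.
Proof. by rewrite (additiveB (es_thrD S x)). Qed.
Lemma es_th0l a : thl 0 a = 0. Proof. exact: additive0 (fun x y => es_thDl S x y a). Qed.
Lemma es_thNl x a : thl (- x) a = - thl x a.
Proof. by rewrite (additiveN (fun x y => es_thDl S x y a)). Qed.
Lemma es_thBl x y a : thl (x - y) a = thl x a - thl y a.
Proof. by rewrite (additiveB (fun x y => es_thDl S x y a)). Qed.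
Lemma es_th0r a : thr a 0 = 0. Proof. exact: additive0 (fun x y => es_thDr S x y a). Qed.
Lemma es_thNr x a : thr a (- x) = - thr a x.
Proof. by rewrite (additiveN (fun x y => es_thDr S x y a)). Qed.
Lemma es_thBr x y a : thr a (x - y) = thr a x - thr a y.
Proof. by rewrite (additiveB (fun x y => es_thDr S x y a)). Qed.
Lemma nur_mul0l b : m 0 b = 0. Proof. exact: additive0 (fun x y => nur_mulDl x y b). Qed.
Lemma nur_mulNl a b : m (- a) b = - m a b.
Proof. by rewrite (additiveN (fun x y => nur_mulDl x y b)). Qed.
Lemma nur_mulBl a c b : m (a - c) b = m a b - m c b.
Proof. by rewrite (additiveB (fun x y => nur_mulDl x y b)). Qed.
Lemma nur_mulNr a b : m b (- a) = - m b a. Proof. by rewrite (additiveN (nur_mulDr b)). Qed.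
Lemma nur_mulBr a c b : m b (a - c) = m b a - m b c.
Proof. by rewrite (additiveB (nur_mulDr b)). Qed.

Lemma nur_mul_kerl a b : in_ker S a -> m a b = 0.
Proof. by move=> ha; rewrite -(es_inner_l S) ha es_th0l. Qed.
Lemma nur_mul_kerr a b : in_ker S a -> m b a = 0.
Proof. by move=> ha; rewrite -(es_inner_r S) ha es_th0r. Qed.
End EsystemTheory.

Section ShuklaComplex.
Variables (B : nuRing) (D : pzRingType) (S : Esystem B D) (Q : pzRingType).
Variables (L : Q -> B -> B) (R : B -> Q -> B).
Local Notation cochains := ((Q -> Q -> B) * (Q -> Q -> B))%type.
Implicit Types c k : cochains.

Definition sub_cochains c c' : cochains :=
  (fun x y => c.1 x y - c'.1 x y, fun x y => c.2 x y - c'.2 x y).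

Lemma cohomologous2_diff c1 c1' c2 c2' :
  (forall x y, c2'.1 x y - c2.1 x y = c1'.1 x y - c1.1 x y) ->
  (forall x y, c2'.2 x y - c2.2 x y = c1'.2 x y - c1.2 x y) ->
  cohomologous2 S L R c1 c1' -> cohomologous2 S L R c2 c2'.
Proof.
move=> e1 e2 [t [tk [t0 ht]]]; exists t; do 2!split=> //.
move=> x y; have [h1 h2] := ht x y.
by rewrite -(subrK (c2.1 x y) (c2'.1 x y)) -(subrK (c2.2 x y) (c2'.2 x y)) e1 e2 h1 h2;
  split; abel.
Qed.

Hypothesis LB : forall x a b, L x (a - b) = L x a - L x b.
Hypothesis RB : forall x a b, R (a - b) x = R a x - R b x.

Lemma is_d2_sub m1 n1 x1 e1 a1 l1 r1 m2 n2 x2 e2 a2 l2 r2 m n xi eta al la rh :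
  is_d2 L R m1 n1 x1 e1 a1 l1 r1 -> is_d2 L R m2 n2 x2 e2 a2 l2 r2 ->
  (forall x y, m x y = m1 x y - m2 x y) -> (forall x y, n x y = n1 x y - n2 x y) ->
  (forall x y z, xi x y z = x1 x y z - x2 x y z) ->
  (forall x y, eta x y = e1 x y - e2 x y) ->
  (forall x y z, al x y z = a1 x y z - a2 x y z) ->
  (forall x y z, la x y z = l1 x y z - l2 x y z) ->
  (forall x y z, rh x y z = r1 x y z - r2 x y z) ->
  is_d2 L R m n xi eta al la rh.
Proof.
move=> h1 h2 hm hn hxi heta hal hla hrh x y z.
rewrite hxi heta hal hla hrh !hm !hn !LB !RB.
have [-> [-> [-> [-> ->]]]] := h1 x y z; have [-> [-> [-> [-> ->]]]] := h2 x y z.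
by split; [abel | split; [abel | split; [abel | split; abel]]].
Qed.
End ShuklaComplex.

Section FactorSets.
Variables (B : nuRing) (D : pzRingType) (S : Esystem B D) (C : pzRingType)
  (Q : pzRingType) (psi : {rmorphism Q -> C}) (u : C -> D).
Local Notation d := (es_d S).
Local Notation U x := (u (psi x)).
Local Notation L := (actL S psi u).
Local Notation R := (actR S psi u).
Local Notation cochains := ((Q -> Q -> B) * (Q -> Q -> B))%type.
Implicit Types c k : cochains.

(* A factor set measures the failure of the lift x |-> U x to be additive and
   multiplicative; unlike a 2-cocycle it takes values in B, not in Ker d. *)
Definition factor_set c : Prop :=
  [/\ forall x y, d (c.1 x y) = U x + U y - U (x + y),
      forall x y, d (c.2 x y) = U x * U y - U (x * y),
      forall x, [/\ c.1 0 x = 0, c.1 x 0 = 0, c.2 0 x = 0 & c.2 x 0 = 0] &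
      is_d2 L R c.1 c.2 (@zeroQ3 B Q) (@zeroQ2 B Q)
        (@zeroQ3 B Q) (@zeroQ3 B Q) (@zeroQ3 B Q)].

Lemma actLB x a b : L x (a - b) = L x a - L x b. Proof. exact: es_thlB. Qed.
Lemma actRB x a b : R (a - b) x = R a x - R b x. Proof. exact: es_thrB. Qed.

Lemma factor_set_sub_cocycle c c' :
  factor_set c -> factor_set c' -> is_cocycle2 S L R (sub_cochains c c').
Proof.
move=> [dF dG n h] [dF' dG' n' h']; split; first split.
- by move=> x y; rewrite /in_ker !es_dB dF dF' dG dG' !subrr.
- by move=> x /=; have [-> -> -> ->] := n x; have [-> -> -> ->] := n' x; rewrite subr0.
- by apply: (is_d2_sub actLB actRB h h') => * /=; rewrite ?subr0.
Qed.

Lemma factor_set_subr c k :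
  factor_set c -> is_cocycle2 S L R k -> factor_set (sub_cochains c k).
Proof.
move=> [dF dG n h] [[kk kn] hk]; split.
- by move=> x y; have [k1 _] := kk x y; rewrite /= es_dB k1 subr0 dF.
- by move=> x y; have [_ k2] := kk x y; rewrite /= es_dB k2 subr0 dG.
- by move=> x /=; have [-> -> -> ->] := n x; have [-> [-> [-> ->]]] := kn x; rewrite subr0.
- by apply: (is_d2_sub actLB actRB h hk) => * /=; rewrite ?subr0.
Qed.

Section Obstruction.
Variables (q : {rmorphism D -> C}) (f g : C -> C -> B).
Hypothesis htr : transport_data S q u f g.

Let pullback : cochains := (fun x y => f (psi x) (psi y), fun x y => g (psi x) (psi y)).

Lemma is_d2_pullback : is_d2 L R pullback.1 pullback.2
  (fun x y z => k_xi f (psi x) (psi y) (psi z)) (fun x y => k_eta f (psi x) (psi y))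
  (fun x y z => k_alpha S u g (psi x) (psi y) (psi z))
  (fun x y z => k_lambda S u f g (psi x) (psi y) (psi z))
  (fun x y z => k_rho S u f g (psi x) (psi y) (psi z)).
Proof.
by move=> x y z; rewrite /k_xi /k_eta /k_alpha /k_lambda /k_rho /= !rmorphD !rmorphM.
Qed.

Lemma pullback_obstruction_vanishesP :
  pullback_obstruction_vanishes S psi u f g <-> exists c, factor_set c.
Proof.
have [_ [_ [df [dg fg0]]]] := htr.
split=> [[mu [nu [[hk hn] hd]]] | [c [dF dG n h]]].
- exists (sub_cochains pullback (mu, nu)); split.
  + by move=> x y; have [k1 _] := hk x y; rewrite /= es_dB k1 subr0 df rmorphD.
  + by move=> x y; have [_ k2] := hk x y; rewrite /= es_dB k2 subr0 dg rmorphM.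
  + move=> x /=; have [-> [-> [-> ->]]] := hn x.
    by rewrite rmorph0; have [-> [-> [-> ->]]] := fg0 (psi x); rewrite subr0.
  + by apply: (is_d2_sub actLB actRB is_d2_pullback hd) => * /=; rewrite ?subrr.
- exists (sub_cochains pullback c).1, (sub_cochains pullback c).2; split; first split.
  + by move=> x y; rewrite /in_ker /= !es_dB df dg dF dG !rmorphD !rmorphM !subrr.
  + move=> x /=; have [-> -> -> ->] := n x.
    by rewrite rmorph0; have [-> [-> [-> ->]]] := fg0 (psi x); rewrite subr0.
  + by apply: (is_d2_sub actLB actRB is_d2_pullback h) => * /=; rewrite ?subr0.
Qed.
End Obstruction.
End FactorSets.

Section ExtensionFactorSets.
Variables (B : nuRing) (D : pzRingType) (S : Esystem B D) (C : pzRingType)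
  (q : {rmorphism D -> C}) (Q : pzRingType) (psi : {rmorphism Q -> C}) (u : C -> D).
Local Notation U x := (u (psi x)).
Local Notation L := (actL S psi u).
Local Notation R := (actR S psi u).
Local Notation cochains := ((Q -> Q -> B) * (Q -> Q -> B))%type.

Section Extension.
Variable X : ext_type S q psi.
Local Notation E := (ext_car X).
Local Notation j := (ext_j X).
Local Notation p := (ext_p X).
Local Notation eps := (ext_eps X).
Implicit Types (s : Q -> E) (c : cochains).

Definition normal_section s :=
  [/\ cancel s p, forall x, eps (s x) = U x & s 0 = 0].

Definition section_factor_set s c :=
  forall x y, j (c.1 x y) = s x + s y - s (x + y) /\ j (c.2 x y) = s x * s y - s (x * y).

Lemma ext_jI : injective j. Proof. exact: ext_j_inj. Qed.
Lemma ext_j0 : j 0 = 0. Proof. exact: additive0 (@ext_jD _ _ _ _ _ _ _ X). Qed.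
Lemma ext_jN a : j (- a) = - j a.
Proof. by rewrite (additiveN (@ext_jD _ _ _ _ _ _ _ X)). Qed.
Lemma ext_p_j b : p (j b) = 0. Proof. by apply/(ext_exact (j b)); exists b. Qed.
Lemma ext_j_eq0 a : j a = 0 -> a = 0.
Proof. by move=> ha; apply: ext_jI; rewrite ha ext_j0. Qed.
Lemma ext_kerP e : p e = 0 -> exists b, j b == e.
Proof. by move/(ext_exact e) => [b ->]; exists b. Qed.

Lemma ext_j_actL s x b : normal_section s -> j (L x b) = s x * j b.
Proof. by move=> [_ hs _]; rewrite -ext_eps_l hs. Qed.
Lemma ext_j_actR s x b : normal_section s -> j (R b x) = j b * s x.
Proof. by move=> [_ hs _]; rewrite -ext_eps_r hs. Qed.

Lemma exists_section_factor_set s : normal_section s -> exists c, section_factor_set s c.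
Proof.
move=> [ps _ _].
have exF x y : exists b, j b == s x + s y - s (x + y).
  by apply: ext_kerP; rewrite rmorphB rmorphD !ps subrr.
have exG x y : exists b, j b == s x * s y - s (x * y).
  by apply: ext_kerP; rewrite rmorphB rmorphM !ps subrr.
exists (fun x y => xchoose (exF x y), fun x y => xchoose (exG x y)) => x y.
by split; apply/eqP; [exact: xchooseP (exF x y) | exact: xchooseP (exG x y)].
Qed.

Lemma section_factor_setP s c :
  normal_section s -> section_factor_set s c -> factor_set S psi u c.
Proof.
move=> ns hc; have [ps es s0] := ns.
have hF x y := proj1 (hc x y); have hG x y := proj2 (hc x y).
split.
- by move=> x y; rewrite -(ext_eps_j X) hF !rmorphB rmorphD !es rmorphD.
- by move=> x y; rewrite -(ext_eps_j X) hG !rmorphB rmorphM !es rmorphM.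
- move=> x; split; apply: ext_j_eq0;
    by rewrite ?hF ?hG ?(s0, add0r, addr0, mul0r, mulr0, subrr, oppr0).
- move=> x y z; rewrite /zeroQ3 /zeroQ2.
  split; [|split; [|split; [|split]]]; apply/esym/ext_j_eq0;
    rewrite !ext_jD ?ext_jN ?(ext_j_actL _ _ ns) ?(ext_j_actR _ _ ns) ?hF ?hG
      ?mulrDr ?mulrDl ?mulrN ?mulNr ?mulrA ?[y + x]addrC ?addrA; abel.
Qed.

(* Two normal sections differ by t : Q -> Ker d, and their factor sets differ
   by the coboundary of t. *)
Lemma section_factor_sets_cohomologous s1 s2 c1 c2 :
  normal_section s1 -> normal_section s2 ->
  section_factor_set s1 c1 -> section_factor_set s2 c2 -> cohomologous2 S L R c2 c1.
Proof.
move=> ns1 ns2 h1 h2; have [ps1 es1 s10] := ns1; have [ps2 es2 s20] := ns2.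
have ex x : exists b, j b == s1 x - s2 x by apply: ext_kerP; rewrite rmorphB ps1 ps2 subrr.
pose t x := xchoose (ex x).
have ht x : j (t x) = s1 x - s2 x by apply/eqP; exact: xchooseP (ex x).
have tk x : in_ker S (t x) by rewrite /in_ker -(ext_eps_j X) ht rmorphB es1 es2 subrr.
have s1E x : s1 x = j (t x) + s2 x by rewrite ht subrK.
exists t; split=> //; split; first by apply: ext_j_eq0; rewrite ht s10 s20 subrr.
move=> x y; split; apply: ext_jI.
- by rewrite (proj1 (h1 x y)) !ext_jD ?ext_jN (proj1 (h2 x y)) !s1E; abel.
- rewrite (proj2 (h1 x y)) !ext_jD ?ext_jN (proj2 (h2 x y)) (ext_j_actL _ _ ns2).
  rewrite (ext_j_actR _ _ ns2) !s1E !mulrDl !mulrDr -(ext_jM X).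
  by rewrite (nur_mul_kerl _ (tk x)) ext_j0; abel.
Qed.

Hypothesis hco : is_coker S q.
Hypothesis qu : cancel u q.
Hypothesis u0 : u 0 = 0.

(* A lift e of x is corrected by the element of B with d b = eps e - U x,
   which exists because q (eps e - U x) = psi x - psi x = 0. *)
Lemma exists_normal_section : exists s, normal_section s.
Proof.
have lift x : exists e, (p e == x) && (eps e == U x).
  have [e pe] := ext_p_surj X x.
  have : q (eps e - U x) = 0 by rewrite rmorphB ext_induces pe qu subrr.
  move/(proj2 hco _) => [b hb]; exists (e - j b).
  by rewrite !rmorphB ext_p_j subr0 pe ext_eps_j -hb subKr !eqxx.
exists (fun x => if x == 0 then 0 else xchoose (lift x)); split.
- move=> x; case: eqP => [->|_]; first by rewrite rmorph0.
  by case/andP: (xchooseP (lift x)) => /eqP.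
- move=> x; case: eqP => [->|_]; first by rewrite !rmorph0 u0.
  by case/andP: (xchooseP (lift x)) => _ /eqP.
- by rewrite eqxx.
Qed.
End Extension.

Lemma ext_equiv_section_factor_set X Y (sX : Q -> ext_car X) c : ext_equiv X Y ->
  normal_section sX -> section_factor_set sX c ->
  exists2 sY : Q -> ext_car Y, normal_section sY & section_factor_set sY c.
Proof.
move=> [eta [ej [ep ee]]] [ps es s0] hc; exists (fun x => eta (sX x)).
  by split=> [x|x|] /=; rewrite ?ep ?ee ?ps ?es // s0 rmorph0.
move=> x y; rewrite -!ej (proj1 (hc x y)) (proj2 (hc x y)) /=.
by rewrite !rmorphB rmorphD rmorphM.
Qed.

Section CohomologousEquivalent.
Variables (X Y : ext_type S q psi) (sX : Q -> ext_car X) (sY : Q -> ext_car Y).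
Variables (cX cY : cochains) (t : Q -> B).
Hypotheses (nsX : normal_section sX) (nsY : normal_section sY).
Hypotheses (hcX : section_factor_set sX cX) (hcY : section_factor_set sY cY).
Hypotheses (tk : forall x, in_ker S (t x)) (t0 : t 0 = 0).
Hypothesis ht : forall x y, cX.1 x y = cY.1 x y + (t x + t y - t (x + y)) /\
  cX.2 x y = cY.2 x y + (L x (t y) + R (t x) y - t (x * y)).
Local Notation jX := (ext_j X).
Local Notation jY := (ext_j Y).
Local Notation pX := (ext_p X).

Lemma ext_coord_subproof e : exists b, jX b == e - sX (pX e).
Proof. by have [ps _ _] := nsX; apply: ext_kerP; rewrite rmorphB ps subrr. Qed.

Definition ext_coord e := xchoose (ext_coord_subproof e).

Lemma ext_decomp e : e = sX (pX e) + jX (ext_coord e).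
Proof. by rewrite (eqP (xchooseP (ext_coord_subproof e))) addrC subrK. Qed.

Lemma ext_p_decomp x b : pX (sX x + jX b) = x.
Proof. by have [ps _ _] := nsX; rewrite rmorphD ps ext_p_j addr0. Qed.

Lemma ext_coord_decomp x b : ext_coord (sX x + jX b) = b.
Proof.
apply: (@ext_jI X).
by rewrite (eqP (xchooseP (ext_coord_subproof _))) ext_p_decomp addrC addKr.
Qed.

Definition ext_transfer e := sY (pX e) + jY (ext_coord e + t (pX e)).

Lemma ext_transfer_decomp x b : ext_transfer (sX x + jX b) = sY x + jY (b + t x).
Proof. by rewrite /ext_transfer ext_coord_decomp ext_p_decomp. Qed.

Lemma ext_transferD : {morph ext_transfer : a b / a + b}.
Proof.
move=> e1 e2; rewrite (ext_decomp e1) (ext_decomp e2).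
move: (pX e1) (ext_coord e1) (pX e2) (ext_coord e2) => x1 b1 x2 b2.
have -> : sX x1 + jX b1 + (sX x2 + jX b2) = sX (x1 + x2) + jX (b1 + b2 + cX.1 x1 x2).
  by rewrite !ext_jD (proj1 (hcX x1 x2)); abel.
rewrite !ext_transfer_decomp (proj1 (ht x1 x2)) !ext_jD ?ext_jN (proj1 (hcY x1 x2)).
abel.
Qed.

Lemma ext_transferM : {morph ext_transfer : a b / a * b}.
Proof.
move=> e1 e2; rewrite (ext_decomp e1) (ext_decomp e2).
move: (pX e1) (ext_coord e1) (pX e2) (ext_coord e2) => x1 b1 x2 b2.
have -> : (sX x1 + jX b1) * (sX x2 + jX b2)
    = sX (x1 * x2) + jX (cX.2 x1 x2 + L x1 b2 + R b1 x2 + nur_mul b1 b2).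
  rewrite !ext_jD (proj2 (hcX x1 x2)) (ext_j_actL _ _ nsX) (ext_j_actR _ _ nsX) ext_jM.
  by rewrite !mulrDl !mulrDr; abel.
have sYM : sY x1 * sY x2 = jY (cY.2 x1 x2) + sY (x1 * x2).
  by rewrite (proj2 (hcY x1 x2)) subrK.
rewrite !ext_transfer_decomp (proj2 (ht x1 x2)) !mulrDl !mulrDr sYM.
rewrite -(ext_j_actL _ _ nsY) -(ext_j_actR _ _ nsY) -!(ext_jM Y) /actL /actR.
rewrite !(es_thlD S) !(es_thrD S) !nur_mulDl !nur_mulDr.
rewrite !(nur_mul_kerl _ (tk _)) !(nur_mul_kerr _ (tk _)) !ext_jD ?ext_jN ?ext_j0.
abel.
Qed.

Lemma ext_transfer1 : ext_transfer 1 = 1.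
Proof.
have [ps _ _] := nsY.
have [c /eqP hc] : exists c, jY c == 1 - sY 1.
  by apply: ext_kerP; rewrite rmorphB rmorph1 ps subrr.
have one : ext_transfer (sX 1 + jX (c - t 1)) = 1.
  by rewrite ext_transfer_decomp subrK hc addrC subrK.
by rewrite -[ext_transfer 1]mulr1 -{1}one -ext_transferM mul1r one.
Qed.

Lemma cohomologous_ext_equiv : ext_equiv X Y.
Proof.
have [_ esX sX0] := nsX; have [psY esY sY0] := nsY.
have tZ : zmod_morphism ext_transfer by move=> a b; rewrite (additiveB ext_transferD).
have tM : monoid_morphism ext_transfer by split; [exact: ext_transfer1 | exact: ext_transferM].
exists (HB.pack_for {rmorphism ext_car X -> ext_car Y} ext_transfer
  (GRing.isZmodMorphism.Build _ _ ext_transfer tZ)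
  (GRing.isMonoidMorphism.Build _ _ ext_transfer tM)).
split; [|split]=> [b|e|e] /=.
- by rewrite -[jX b]add0r -sX0 ext_transfer_decomp t0 sY0 addr0 add0r.
- by rewrite (ext_decomp e) ext_transfer_decomp ext_p_decomp rmorphD psY ext_p_j addr0.
- rewrite (ext_decomp e) ext_transfer_decomp !rmorphD esY esX !ext_eps_j (es_dD S).
  by rewrite (tk _) addr0.
Qed.
End CohomologousEquivalent.

Lemma cohomologous_section_factor_set_equiv X Y
  (sX : Q -> ext_car X) (sY : Q -> ext_car Y) cX cY :
  normal_section sX -> normal_section sY ->
  section_factor_set sX cX -> section_factor_set sY cY ->
  cohomologous2 S L R cY cX -> ext_equiv X Y.
Proof.
move=> nsX nsY hcX hcY [t [tk [t0 ht]]].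
exact: (cohomologous_ext_equiv nsX nsY hcX hcY tk t0 ht).
Qed.
End ExtensionFactorSets.

Record factor_system (B : nuRing) (D : pzRingType) (S : Esystem B D) (C : pzRingType)
    (q : {rmorphism D -> C}) (Q : pzRingType) (psi : {rmorphism Q -> C}) (u : C -> D) :=
  FactorSystem {
  fs_cochains : (Q -> Q -> B) * (Q -> Q -> B);
  fs_unit : B;
  fs_regular : es_regular S;
  fs_coker : is_coker S q;
  fs_lift : cancel u q;
  fs_lift0 : u 0 = 0;
  fs_factor_set : factor_set S psi u fs_cochains;
  fs_unitE : es_d S fs_unit = 1 - u (psi 1) }.

(* The carrier depends on P so that each factor system carries its own
   canonical ring structure on B x Q. *)
Definition crossed_product B D S C q Q psi u (P : @factor_system B D S C q Q psi u) : Type :=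
  (nur_car B * Q)%type.

Section CrossedProduct.
Variables (B : nuRing) (D : pzRingType) (S : Esystem B D) (C : pzRingType)
  (q : {rmorphism D -> C}) (Q : pzRingType) (psi : {rmorphism Q -> C}) (u : C -> D)
  (P : factor_system S q psi u).
Local Notation d := (es_d S).
Local Notation thl := (es_thl S).
Local Notation thr := (es_thr S).
Local Notation m := (@nur_mul B).
Local Notation F := (fs_cochains P).1.
Local Notation G := (fs_cochains P).2.
Local Notation b0 := (fs_unit P).
Local Notation U x := (u (psi x)).
Local Notation E := (crossed_product P).

HB.instance Definition _ := Choice.copy E (nur_car B * Q)%type.

Lemma F0l x : F 0 x = 0. Proof. by have [_ _ /(_ x)[-> _ _ _] _] := fs_factor_set P. Qed.
Lemma G0l x : G 0 x = 0. Proof. by have [_ _ /(_ x)[_ _ -> _] _] := fs_factor_set P. Qed.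
Lemma G0r x : G x 0 = 0. Proof. by have [_ _ /(_ x)[_ _ _ ->] _] := fs_factor_set P. Qed.
Lemma U0 : U 0 = 0. Proof. by rewrite rmorph0 (fs_lift0 P). Qed.
Lemma th1l a : thl 1 a = a. Proof. by have [] := fs_regular P. Qed.
Lemma th1r a : thr a 1 = a. Proof. by have [_ []] := fs_regular P. Qed.
Lemma thlr_comm x y a : thl x (thr a y) = thr (thl x a) y.
Proof. by have [_ [_]] := fs_regular P. Qed.
Lemma UD x y : U (x + y) = U x + U y - d (F x y).
Proof. by have [-> _ _ _] := fs_factor_set P; abel. Qed.
Lemma dG x y : d (G x y) = U x * U y - U (x * y).
Proof. by have [_ -> _ _] := fs_factor_set P. Qed.
Lemma UM x y : U (x * y) = U x * U y - d (G x y). Proof. by rewrite dG; abel. Qed.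
Lemma U1 : U 1 = 1 - d b0. Proof. by rewrite (fs_unitE P); abel. Qed.
Lemma F_assoc x y z : F x y + F (x + y) z - F y z - F x (y + z) = 0.
Proof. by have [_ _ _ /(_ x y z)[<- _]] := fs_factor_set P. Qed.
Lemma F_comm x y : F x y - F y x = 0.
Proof. by have [_ _ _ /(_ x y x)[_ [<- _]]] := fs_factor_set P. Qed.
Lemma G_assoc x y z :
  thl (U x) (G y z) + G x (y * z) - thr (G x y) (U z) - G (x * y) z = 0.
Proof. by have [_ _ _ /(_ x y z)[_ [_ [<- _]]]] := fs_factor_set P. Qed.
Lemma G_distrl x y z :
  thl (U x) (F y z) + G x (y + z) - G x y - G x z - F (x * y) (x * z) = 0.
Proof. by have [_ _ _ /(_ x y z)[_ [_ [_ [<- _]]]]] := fs_factor_set P. Qed.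
Lemma G_distrr x y z :
  thr (F x y) (U z) + G (x + y) z - G x z - G y z - F (x * z) (y * z) = 0.
Proof. by have [_ _ _ /(_ x y z)[_ [_ [_ [_ <-]]]]] := fs_factor_set P. Qed.

Definition cp_add (a b : E) : E := (a.1 + b.1 + F a.2 b.2, a.2 + b.2).
Definition cp_opp (a : E) : E := (- a.1 - F a.2 (- a.2), - a.2).
Definition cp_zero : E := (0, 0).
Definition cp_mul (a b : E) : E :=
  (m a.1 b.1 + thl (U a.2) b.1 + thr a.1 (U b.2) + G a.2 b.2, a.2 * b.2).

(* (b0, 1) would be a unit if G 1 _ and G _ 1 vanished; the correction
   unit_defect lies in Ker d and absorbs them (unit_defect_mull/r). *)
Definition unit_defect := G 1 1 + thr b0 (U 1).
Definition cp_one : E := (b0 - unit_defect, 1).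

Lemma cp_addA : associative cp_add.
Proof.
move=> [a x] [b y] [c z]; rewrite /cp_add /=; congr (_, _); last by rewrite addrA.
by apply/esym; apply: (eq_of_subr_eq (F_assoc x y z)); abel.
Qed.

Lemma cp_addC : commutative cp_add.
Proof.
move=> [a x] [b y]; rewrite /cp_add /=; congr (_, _); last by rewrite addrC.
by apply: (eq_of_subr_eq (F_comm x y)); abel.
Qed.

Lemma cp_add0 : left_id cp_zero cp_add.
Proof. by move=> [a x]; rewrite /cp_add /= F0l !add0r addr0. Qed.

Lemma cp_addN : left_inverse cp_zero cp_opp cp_add.
Proof.
move=> [a x]; rewrite /cp_add /cp_opp /cp_zero /=; congr (_, _); last by rewrite addNr.
by apply: (eq_of_subr_eq (F_comm (- x) x)); abel.
Qed.

Ltac es_expand := rewrite ?(es_thlD S) ?es_thlN ?(es_thrD S) ?es_thrN ?(es_thDl S)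
  ?es_thNl ?(es_thDr S) ?es_thNr ?nur_mulDl ?nur_mulDr ?nur_mulNl ?nur_mulNr
  ?(es_thMl S) ?(es_thMr S) ?(es_inner_l S) ?(es_inner_r S) ?nur_mulA
  ?(es_thlM S) ?(es_thrM S) ?(es_thlr S) ?thlr_comm.

Lemma cp_mulA : associative cp_mul.
Proof.
move=> [a x] [b y] [c z]; rewrite /cp_mul /=; congr (_, _); last by rewrite mulrA.
rewrite !UM; es_expand; rewrite ?mulrA.
by apply: (eq_of_subr_eq (G_assoc x y z)); abel.
Qed.

Lemma cp_mulDl : left_distributive cp_mul cp_add.
Proof.
move=> [a x] [b y] [c z]; rewrite /cp_mul /cp_add /=; congr (_, _); last by rewrite mulrDl.
rewrite UD; es_expand; rewrite ?mulrDl.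
by apply: (eq_of_subr_eq (G_distrr x y z)); abel.
Qed.

Lemma cp_mulDr : right_distributive cp_mul cp_add.
Proof.
move=> [a x] [b y] [c z]; rewrite /cp_mul /cp_add /=; congr (_, _); last by rewrite mulrDr.
rewrite UD; es_expand; rewrite ?mulrDr.
by apply: (eq_of_subr_eq (G_distrl x y z)); abel.
Qed.

Lemma unit_defect_ker : in_ker S unit_defect.
Proof.
rewrite /in_ker /unit_defect (es_dD S) (es_d_thr S) dG (fs_unitE P).
by rewrite mul1r mulrBl mul1r; abel.
Qed.

Lemma thU1l a : thl (U 1) a = a - thr b0 (d a).
Proof. by rewrite U1 es_thBl th1l (es_inner_l S) (es_inner_r S). Qed.
Lemma thU1r a : thr a (U 1) = a - thl (d a) b0.
Proof. by rewrite U1 es_thBr th1r (es_inner_l S) (es_inner_r S). Qed.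

Lemma G1l y : G 1 y = thr unit_defect (U y) - thr b0 (U y).
Proof.
have := G_assoc 1 1 y; rewrite !mul1r thU1l dG mul1r es_thBr (es_thMr S).
by rewrite /unit_defect (es_thrD S) => h; apply: (eq_of_subr_eq h); abel.
Qed.

Lemma G1r y : G y 1 = thl (U y) unit_defect - thl (U y) b0.
Proof.
have := G_assoc y 1 1; rewrite !mulr1 thU1r dG mulr1 es_thBl (es_thMl S).
have -> : thl (U 1) b0 = thr b0 (U 1) by rewrite thU1l thU1r (es_inner_l S) (es_inner_r S).
by rewrite /unit_defect (es_thlD S) => h; apply/esym; apply: (eq_of_subr_eq h); abel.
Qed.

Lemma cp_mul1 : left_id cp_one cp_mul.
Proof.
move=> [b y]; rewrite /cp_mul /cp_one /=; congr (_, _); last by rewrite mul1r.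
rewrite G1l nur_mulBl (nur_mul_kerl _ unit_defect_ker) U1 es_thBl th1l (es_inner_l S).
by rewrite es_thrB; abel.
Qed.

Lemma cp_mulr1 : right_id cp_one cp_mul.
Proof.
move=> [b y]; rewrite /cp_mul /cp_one /=; congr (_, _); last by rewrite mulr1.
rewrite G1r nur_mulBr (nur_mul_kerr _ unit_defect_ker) U1 es_thBr th1r (es_inner_r S).
by rewrite es_thlB; abel.
Qed.

HB.instance Definition _ := GRing.isPzRing.Build E cp_addA cp_addC cp_add0 cp_addN
  cp_mulA cp_mul1 cp_mulr1 cp_mulDl cp_mulDr.

Definition cp_p (a : E) : Q := a.2.
Lemma cp_p_zmod : zmod_morphism cp_p. Proof. by []. Qed.
HB.instance Definition _ := GRing.isZmodMorphism.Build E Q cp_p cp_p_zmod.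
Lemma cp_p_monoid : monoid_morphism cp_p. Proof. by []. Qed.
HB.instance Definition _ := GRing.isMonoidMorphism.Build E Q cp_p cp_p_monoid.

Definition cp_eps (a : E) : D := d a.1 + U a.2.
Lemma cp_epsD a b : cp_eps (cp_add a b) = cp_eps a + cp_eps b.
Proof. by case: a b => [a x] [b y]; rewrite /cp_eps /= !(es_dD S) UD; abel. Qed.
Lemma cp_eps_zmod : zmod_morphism cp_eps.
Proof. by move=> a b; rewrite (additiveB (cp_epsD : {morph cp_eps : x y / x + y})). Qed.
HB.instance Definition _ := GRing.isZmodMorphism.Build E D cp_eps cp_eps_zmod.
Lemma cp_eps_monoid : monoid_morphism cp_eps.
Proof.
split; first by rewrite /cp_eps /= es_dB unit_defect_ker (fs_unitE P); abel.
move=> [a x] [b y]; change (cp_eps (cp_mul (a, x) (b, y)) = cp_eps (a, x) * cp_eps (b, y)).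
rewrite /cp_eps /= !(es_dD S) (es_dM S) (es_d_thl S) (es_d_thr S) UM dG !mulrDl !mulrDr; abel.
Qed.
HB.instance Definition _ := GRing.isMonoidMorphism.Build E D cp_eps cp_eps_monoid.

Definition cp_j (b : B) : E := (b, 0).
Lemma cp_jD a b : cp_j (a + b) = cp_j a + cp_j b.
Proof.
by change ((a + b, 0) = cp_add (a, 0) (b, 0)); rewrite /cp_add /= F0l !addr0.
Qed.
Lemma cp_jM a b : cp_j (m a b) = cp_j a * cp_j b.
Proof.
change ((m a b, 0) = cp_mul (a, 0) (b, 0)).
by rewrite /cp_mul /= U0 es_th0l es_th0r G0r !addr0 mulr0.
Qed.
Lemma cp_j_inj : injective cp_j. Proof. by move=> a b [->]. Qed.
Lemma cp_p_surj x : exists e, (cp_p : {rmorphism E -> Q}) e = x.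
Proof. by exists ((0, x) : E). Qed.
Lemma cp_exact (e : E) : (cp_p : {rmorphism E -> Q}) e = 0 <-> exists b, e = cp_j b.
Proof. by case: e => a x; split=> [/= ->|[b [_ ->]]]; first exists a. Qed.
Lemma cp_eps_j b : (cp_eps : {rmorphism E -> D}) (cp_j b) = d b.
Proof. by rewrite /= /cp_eps /= U0 addr0. Qed.
Lemma cp_eps_l (e : E) b : cp_j (thl ((cp_eps : {rmorphism E -> D}) e) b) = e * cp_j b.
Proof.
case: e => a x; change ((thl (d a + U x) b, 0) = cp_mul (a, x) (b, 0)).
by rewrite /cp_mul /= U0 es_th0r G0r !addr0 mulr0 (es_thDl S) (es_inner_l S).
Qed.
Lemma cp_eps_r (e : E) b : cp_j (thr b ((cp_eps : {rmorphism E -> D}) e)) = cp_j b * e.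
Proof.
case: e => a x; change ((thr b (d a + U x), 0) = cp_mul (b, 0) (a, x)).
by rewrite /cp_mul /= U0 es_th0l G0l addr0 mul0r (es_thDr S) (es_inner_r S) addr0.
Qed.
Lemma cp_induces (e : E) :
  q ((cp_eps : {rmorphism E -> D}) e) = psi ((cp_p : {rmorphism E -> Q}) e).
Proof.
case: e => a x; rewrite /= /cp_eps /= rmorphD (fs_lift P).
by rewrite (proj2 (proj2 (fs_coker P) _)) ?add0r; last by exists a.
Qed.

Definition crossed_product_ext : ext_type S q psi :=
  ExtT cp_jD cp_jM cp_j_inj cp_p_surj cp_exact cp_eps_j cp_eps_l cp_eps_r cp_induces.

Definition cp_section (x : Q) : ext_car crossed_product_ext := ((0, x) : E).

Lemma cp_section_normal : normal_section u cp_section.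
Proof. by split=> // x; rewrite /= /cp_eps /= es_d0 add0r. Qed.

Lemma cp_section_factor_set : section_factor_set cp_section (fs_cochains P).
Proof.
move=> x y; split; apply/eqP; rewrite eq_sym subr_eq; apply/eqP.
- change (cp_add (0, x) (0, y) = cp_add (F x y, 0) (0, x + y)).
  by rewrite /cp_add /= F0l !addr0 !add0r.
- change (cp_mul (0, x) (0, y) = cp_add (G x y, 0) (0, x * y)).
  by rewrite /cp_mul /cp_add /= nur_mul0l es_thl0 es_thr0 F0l !add0r !addr0.
Qed.
End CrossedProduct.

Section Classification.
Variables (B : nuRing) (D : pzRingType) (S : Esystem B D) (C : pzRingType)
  (q : {rmorphism D -> C}) (Q : pzRingType) (psi : {rmorphism Q -> C})
  (u : C -> D).
Hypothesis hreg : es_regular S.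
Hypothesis hco : is_coker S q.
Hypotheses (qu : cancel u q) (u0 : u 0 = 0).
Local Notation d := (es_d S).
Local Notation L := (actL S psi u).
Local Notation R := (actR S psi u).
Local Notation cochains := ((Q -> Q -> B) * (Q -> Q -> B))%type.
Local Notation ext := (ext_type S q psi).

Lemma exists_unit_lift : exists b, d b == 1 - u (psi 1).
Proof.
have : q (1 - u (psi 1)) = 0 by rewrite rmorphB rmorph1 qu rmorph1 subrr.
by move/(proj2 hco _) => [b ->]; exists b.
Qed.

Definition factor_system_of c (hc : factor_set S psi u c) : factor_system S q psi u :=
  FactorSystem hreg hco qu u0 hc (eqP (xchooseP exists_unit_lift)).

Lemma exists_normal_factor_set (X : ext) :
  exists sc : (Q -> ext_car X) * cochains,
    normal_section u sc.1 /\ section_factor_set sc.1 sc.2.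
Proof.
have [s ns] := exists_normal_section X hco qu u0.
by have [c hc] := exists_section_factor_set ns; exists (s, c).
Qed.

Definition ext_normal_data (X : ext) :=
  proj1_sig (constructive_indefinite_description _ (exists_normal_factor_set X)).
Definition ext_cochains (X : ext) := (ext_normal_data X).2.

Lemma ext_normal_dataP (X : ext) :
  normal_section u (ext_normal_data X).1 /\
  section_factor_set (ext_normal_data X).1 (ext_cochains X).
Proof.
exact: proj2_sig (constructive_indefinite_description _ (exists_normal_factor_set X)).
Qed.

Lemma ext_cochains_factor_set (X : ext) : factor_set S psi u (ext_cochains X).
Proof. by have [ns hc] := ext_normal_dataP X; exact: section_factor_setP ns hc. Qed.

Section FixedFactorSet.
Variable c0 : cochains.
Hypothesis hc0 : factor_set S psi u c0.

Definition ext_class (X : ext) := sub_cochains c0 (ext_cochains X).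

Lemma ext_equiv_cohomologous (X Y : ext) :
  ext_equiv X Y <-> cohomologous2 S L R (ext_class X) (ext_class Y).
Proof.
have [nsX hcX] := ext_normal_dataP X; have [nsY hcY] := ext_normal_dataP Y.
split=> [eqXY | coh].
- have [sY' nsY' hcY'] := ext_equiv_section_factor_set eqXY nsX hcX.
  apply: cohomologous2_diff (section_factor_sets_cohomologous nsY' nsY hcY' hcY) => x y /=;
    abel.
- apply: cohomologous_section_factor_set_equiv nsX nsY hcX hcY _.
  by apply: cohomologous2_diff coh => x y /=; abel.
Qed.

Lemma cocycle_ext_class k :
  is_cocycle2 S L R k -> exists X, cohomologous2 S L R (ext_class X) k.
Proof.
move=> hk; pose P := factor_system_of (factor_set_subr hc0 hk).
exists (crossed_product_ext P).
have [ns hc] := ext_normal_dataP (crossed_product_ext P).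
have := section_factor_sets_cohomologous ns (cp_section_normal P) hc (cp_section_factor_set P).
by apply: cohomologous2_diff => x y /=; abel.
Qed.
End FixedFactorSet.
End Classification.

Theorem mainTheorem9 (B : nuRing) (D : pzRingType) (S : Esystem B D)
  (C : pzRingType) (q : {rmorphism D -> C})
  (Q : pzRingType) (psi : {rmorphism Q -> C})
  (u : C -> D) (f g : C -> C -> B) :
  es_regular S -> is_coker S q -> transport_data S q u f g ->
  (inhabited (ext_type S q psi) <->
     pullback_obstruction_vanishes S psi u f g) /\
  (pullback_obstruction_vanishes S psi u f g ->
     ext_H2_bijection S q psi u).
Proof.
move=> hreg hco htr; have [qu [u0 _]] := htr.
have vanishesP := pullback_obstruction_vanishesP psi htr.
split.
  split=> [[X] | /vanishesP [c hc]]; last by constructor; exact: crossed_product_ext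
    (factor_system_of hreg hco qu u0 hc).
  by apply/vanishesP; exists (ext_cochains hco qu u0 X); exact: ext_cochains_factor_set.
move=> /vanishesP [c0 hc0]; exists (ext_class hco qu u0 c0); split; [|split].
- by move=> X; exact: factor_set_sub_cocycle hc0 (ext_cochains_factor_set hco qu u0 X).
- exact: ext_equiv_cohomologous.
- exact: cocycle_ext_class hc0.
Qed.
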